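(* Let $G=(V,E)$ be a finite simple connected graph, $t\ge 0$ an integer, $r\ge 0$ an integer, and $\Phi\subseteq\Phi^{(t)}_{\mathrm{all}}$ a set of failure patterns. Then consensus in $G$ can be solved by an oblivious algorithm running in $r$ rounds under the $t$-resilient model with failure patterns in $\Phi$ (i.e. for every input assignment and every failure pattern in $\Phi$) if and only if every connected component of the information flow graph $\mathsf{IF}(G,r,\Phi)$ has a dominating node in $V$.
   Context: Model. $G=(V,E)$ is a finite simple connected undirected graph whose nodes carry distinct identifiers; $N(v)$ is the neighbourhood of $v$. Computation proceeds in synchronous rounds; in each round every node sends a message to each neighbour, receives its neighbours' messages, and computes. Nodes know $G$ and $t$. Failure patterns. A failure pattern is a set $\varphi=\{(v,F_v,f_v): v\in F\}$ with $F\subseteq V$, $|F|\le t$, and for each $v\in F$ an integer $f_v\ge1$ and a nonempty $F_v\subseteq N(v)$: $v$ acts normally in rounds $1,\dots,f_v-1$, in round $f_v$ its messages reach exactly $N(v)\setminus F_v$, and afterwards it sends nothing. Nodes in $F$ are faulty, the others correct. $\Phi^{(t)}_{\mathrm{all}}$ denotes the set of all failure patterns with at most $t$ faulty nodes. Causal paths. A causal path w.r.t. $\varphi$ from $v$ to $v'$ is a sequence $u_1=v,\dots,u_q=v'$ with $u_{i+1}\in N(u_i)$, such that for each $i<q$, $u_i$ has not crashed during rounds $1,\dots,i-1$, and if $(u_i,F_{u_i},i)\in\varphi$ then $u_{i+1}\notin F_{u_i}$; its length is $q-1$. Views. Each node $u$ has input $x_u$; in flooding every node sends $(u,x_u)$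 in round 1 and forwards all known pairs in later rounds. $\mathrm{view}(v,r,\varphi)$ is the set of pairs $(u,x_u)$ known to $v$ after $r$ rounds under $\varphi$; $(u,x_u)\in\mathrm{view}(v,r,\varphi)$ iff $u=v$ or some causal path w.r.t. $\varphi$ from $u$ to $v$ has length at most $r$. Views are identified through the set of nodes $u$ whose pair they contain (this set depends only on $G,\varphi,r$), so the graph below does not depend on inputs. Oblivious algorithms and consensus. An oblivious algorithm running in $r$ rounds floods for $r$ rounds, then each correct node $v$ outputs a value depending only on $v$ and $\mathrm{view}(v,r,\varphi)$. Consensus: inputs come from a set $I$ with $|I|\ge2$; every correct node outputs a value in $I$, all correct nodes output the same value, and every output equals some node's input. Information flow graph. $\mathsf{IF}(G,r,\Phi)$ is the undirected graph whose vertices are all pairs $(v,\mathrm{view}(v,r,\varphi))$ with $\varphi\in\Phi$ and $v$ correct in $\varphi$ (two such pairs are the same vertex if the node and the view coincide), with an edge between $(v_1,w_1)$ and $(v_2,w_2)$ whenever there exists $\varphi\in\Phi$ with $w_1=\mathrm{view}(v_1,r,\varphi)$ and $w_2=\mathrm{view}(v_2,r,\varphi)$. Domination. A node $v\in V$ dominates a connected component $C$ of $\mathsf{IF}(G,r,\Phi)$ if for every $\varphi\in\Phi$ and every $u\in V$ with $(u,\mathrm{view}(u,r,\varphi))\in C$ we have $(v,x_v)\in\mathrm{view}(u,r,\varphi)$ ($v$ itself need not be correct). *)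

From Stdlib Require Import Relations.
From mathcomp Require Import all_boot.

Set Implicit Arguments.
Unset Strict Implicit.
Unset Printing Implicit Defensive.

Definition simple_graph (T : finType) (e : rel T) : Prop :=
  symmetric e /\ irreflexive e.

Definition connected_graph (T : finType) (e : rel T) : Prop :=
  forall x y : T, connect e x y.

Definition nbhd (T : finType) (e : rel T) (v : T) : {set T} := [set w | e v w].

(* A failure pattern phi = {(v, F_v, f_v) : v in F} is represented as the map
   v |-> Some (F_v, f_v) if v in F (v faulty), None if v is correct. *)
Definition fpattern (T : finType) := T -> option ({set T} * nat).

Definition faulty (T : finType) (phi : fpattern T) (v : T) : bool := phi v.
Definition correct (T : finType) (phi : fpattern T) (v : T) : bool := ~~ phi v.

Definition valid_fpattern (T : finType) (e : rel T) (t : nat) (phi : fpattern T) : Prop :=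
  #|[set v | faulty phi v]| <= t /\
  forall v (F : {set T}) (f : nat), phi v = Some (F, f) ->
    [/\ 1 <= f, F != set0 & F \subset nbhd e v].

(* Condition for the i-th node x of a causal path (i counted from 1, i.e.
   x = u_i, sending in round i) to pass its message to the next node y:
   x has not crashed during rounds 1..i-1, and if (x,F_x,i) is in phi then
   y is not in F_x. *)
Definition hop_ok (T : finType) (phi : fpattern T) (i : nat) (x y : T) : bool :=
  match phi x with
  | None => true
  | Some (F, f) => (i < f) || ((i == f) && (y \notin F))
  end.

(* The sequence u :: p (u_1 = u, ..., u_q = last u p) is a causal path
   w.r.t. phi from u to v; its length is size p. *)
Definition causal_path (T : finType) (e : rel T) (phi : fpattern T)
    (u v : T) (p : seq T) : bool :=
  [&& path e u p, last u p == v &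
      all (fun i => hop_ok phi i.+1 (nth u (u :: p) i) (nth u p i))
          (iota 0 (size p))].

(* The set of nodes u whose pair (u, x_u) is in view(v, r, phi). *)
Definition view (T : finType) (e : rel T) (r : nat) (phi : fpattern T) (v : T)
    : {set T} :=
  [set u | (u == v) ||
     [exists k : 'I_r.+1, exists p : k.-tuple T, causal_path e phi u v p]].

(* The view with the inputs: the set of pairs (u, x_u), encoded as the
   partial function u |-> Some x_u if (u,x_u) is in the view, None otherwise. *)
Definition view_inputs (T : finType) (e : rel T) (r : nat) (phi : fpattern T)
    (I : Type) (x : T -> I) (v : T) : {ffun T -> option I} :=
  [ffun u => if u \in view e r phi v then Some (x u) else None].

(* An oblivious algorithm running in r rounds is a decision map
   dec : node -> view (set of pairs) -> output. *)
Definition oblivious_consensus (T : finType) (e : rel T) (r : nat)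
    (Phi : fpattern T -> Prop) (I : Type)
    (dec : T -> {ffun T -> option I} -> I) : Prop :=
  forall (x : T -> I) (phi : fpattern T), Phi phi ->
    (forall v w, correct phi v -> correct phi w ->
       dec v (view_inputs e r phi x v) = dec w (view_inputs e r phi x w)) /\
    (forall v, correct phi v -> exists u, dec v (view_inputs e r phi x v) = x u).

Definition consensus_solvable_oblivious (T : finType) (e : rel T) (r : nat)
    (Phi : fpattern T -> Prop) (I : Type) : Prop :=
  exists dec : T -> {ffun T -> option I} -> I, oblivious_consensus e r Phi dec.

(* Information flow graph IF(G, r, Phi): vertices are pairs (v, W). *)
Definition IF_vertex (T : finType) (e : rel T) (r : nat)
    (Phi : fpattern T -> Prop) (a : T * {set T}) : Prop :=
  exists phi, Phi phi /\ correct phi a.1 /\ a.2 = view e r phi a.1.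

Definition IF_edge (T : finType) (e : rel T) (r : nat)
    (Phi : fpattern T -> Prop) (a b : T * {set T}) : Prop :=
  exists phi, [/\ Phi phi, correct phi a.1, correct phi b.1,
                  a.2 = view e r phi a.1 & b.2 = view e r phi b.1].

Definition IF_connected (T : finType) (e : rel T) (r : nat)
    (Phi : fpattern T -> Prop) : relation (T * {set T}) :=
  clos_refl_trans _ (IF_edge e r Phi).

Definition dominates (T : finType) (e : rel T) (r : nat)
    (Phi : fpattern T -> Prop) (v : T) (a : T * {set T}) : Prop :=
  forall (phi : fpattern T) (u : T), Phi phi ->
    IF_connected e r Phi a (u, view e r phi u) ->
    v \in view e r phi u.

Definition every_component_dominated (T : finType) (e : rel T) (r : nat)
    (Phi : fpattern T -> Prop) : Prop :=
  forall a, IF_vertex e r Phi a -> exists v : T, dominates e r Phi v a.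

From Stdlib Require Import Relations.
From mathcomp Require Import all_boot.
From Stdlib Require Import Classical ClassicalEpsilon.

Set Implicit Arguments.
Unset Strict Implicit.
Unset Printing Implicit Defensive.

(* If some component C of IF(G, r, Phi) has no dominating node, then every
   node v is missing from the view of some vertex of C.  Since the correct
   nodes of one failure pattern agree, an oblivious decision is constant on C,
   so changing the input of v cannot change the decision of C.  Changing the
   inputs one node at a time turns the all-a assignment into the all-b one
   without changing the decision of C, contradicting validity.  Conversely,
   every vertex of a component can pick the same dominating node and output
   its input, which lies in its view. *)

Section InformationFlow.
Variables (T : finType) (e : rel T) (r : nat) (Phi : fpattern T -> Prop).

Local Notation IF_connected := (IF_connected e r Phi).
Local Notation dominates := (dominates e r Phi).

Lemma IF_edge_sym a b : IF_edge e r Phi a b -> IF_edge e r Phi b a.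
Proof. by case=> phi [Hphi Ha Hb Ea Eb]; exists phi. Qed.

Lemma IF_connected_sym a b : IF_connected a b -> IF_connected b a.
Proof.
elim=> [c d /IF_edge_sym|c|c d f _ Hdc _ Hfd].
- exact: rt_step.
- exact: rt_refl.
- exact: rt_trans Hfd Hdc.
Qed.

Lemma dominates_connected v a b :
  IF_connected a b -> dominates v a -> dominates v b.
Proof. by move=> Hab Hva phi u Hphi Hbu; apply: Hva => //; apply: rt_trans Hbu. Qed.

Lemma dominates_view v phi u :
  Phi phi -> dominates v (u, view e r phi u) -> v \in view e r phi u.
Proof. by move=> Hphi; apply; last exact: rt_refl. Qed.

Section Necessity.
Variables (I : Type) (dec : T -> {ffun T -> option I} -> I).
Hypothesis dec_consensus : oblivious_consensus e r Phi dec.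

Definition decide (x : T -> I) (a : T * {set T}) : I :=
  dec a.1 [ffun u => if u \in a.2 then Some (x u) else None].

Lemma eq_decide x y a : x =1 y -> decide x a = decide y a.
Proof. by move=> Exy; congr dec; apply/ffunP => u; rewrite !ffunE Exy. Qed.

Lemma decide_connected x a b : IF_connected a b -> decide x a = decide x b.
Proof.
elim=> [[v V] [w W] [phi [Hphi Hv Hw /= -> ->]]|//|c d f _ -> _ //].
exact: (proj1 (dec_consensus x Hphi)).
Qed.

Lemma decide_const k a : IF_vertex e r Phi a -> decide (fun=> k) a = k.
Proof.
case=> phi [Hphi [Hv Ea]]; rewrite /decide Ea.
by have [u ->] := proj2 (dec_consensus (fun=> k) Hphi) a.1 Hv.
Qed.

Lemma decide_off_dominator x y v a :
  ~ dominates v a -> (forall u, u != v -> x u = y u) -> decide x a = decide y a.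
Proof.
move=> Hnd Exy.
have [phi [u [Hphi Hau Hv]]] : exists phi u,
    [/\ Phi phi, IF_connected a (u, view e r phi u) & v \notin view e r phi u].
  apply: NNPP => Hno; apply: Hnd => phi u Hphi Hau.
  by apply: NNPP => Hv; apply: Hno; exists phi, u; split=> //; apply/negP.
rewrite (decide_connected x Hau) (decide_connected y Hau) /decide /=.
congr dec; apply/ffunP => w; rewrite !ffunE; case: ifP => // Hw.
by rewrite Exy //; apply: contraNneq Hv => <-.
Qed.

Lemma consensus_dominated (ia ib : I) :
  ia <> ib -> every_component_dominated e r Phi.
Proof.
move=> Hab a Ha; apply: NNPP => Hnone.
have decide_flip (s : seq T) : decide (fun u => if u \in s then ib else ia) a = ia.
  elim: s => [|v s IH].
    by rewrite -[RHS](decide_const ia Ha); apply: eq_decide.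
  rewrite -[RHS]IH; apply: (decide_off_dominator (v := v)) => [Hv|u Hu].
    by apply: Hnone; exists v.
  by rewrite in_cons (negbTE Hu).
apply: Hab; rewrite -(decide_flip (enum T)) -[RHS](decide_const ib Ha).
by apply: eq_decide => u; rewrite mem_enum.
Qed.

End Necessity.

Section Sufficiency.
Hypothesis dominated : every_component_dominated e r Phi.

Definition dominatesb v a : bool :=
  if excluded_middle_informative (dominates v a) then true else false.

Lemma dominatesbP v a : reflect (dominates v a) (dominatesb v a).
Proof. by rewrite /dominatesb; case: excluded_middle_informative => H; constructor. Qed.

Definition leader (a : T * {set T}) : option T := [pick v | dominatesb v a].

Lemma leader_connected a b : IF_connected a b -> leader a = leader b.
Proof.
move=> Hab; apply: eq_pick => v.
apply/dominatesbP/dominatesbP; apply: dominates_connected => //.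
exact: IF_connected_sym.
Qed.

Lemma leader_vertex a :
  IF_vertex e r Phi a -> exists2 d, leader a = Some d & dominates d a.
Proof.
move=> Ha; have [d0 Hd0] := dominated Ha; rewrite /leader.
case: pickP => [d /dominatesbP Hd|Hnone]; first by exists d.
by move: (Hnone d0) => /dominatesbP.
Qed.

(* [i0] is a junk default: on a vertex of IF(G, r, Phi) the leader exists and
   lies in the view. *)
Definition leader_decision (I : Type) (i0 : I) (v : T)
    (W : {ffun T -> option I}) : I :=
  if leader (v, [set u | W u]) is Some d then odflt i0 (W d) else i0.

Lemma leader_decision_view (I : Type) (i0 : I) (x : T -> I) phi v :
  Phi phi -> correct phi v -> exists2 d,
    leader (v, view e r phi v) = Some d &
    leader_decision i0 v (view_inputs e r phi x v) = x d.
Proof.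
move=> Hphi Hv.
have [d Hd Hdom] : exists2 d, leader (v, view e r phi v) = Some d &
    dominates d (v, view e r phi v).
  by apply: leader_vertex; exists phi.
have Hin := dominates_view Hphi Hdom.
have Hset : [set u | view_inputs e r phi x v u] = view e r phi v.
  by apply/setP => u; rewrite inE ffunE; case: (u \in _).
by exists d; rewrite // /leader_decision Hset Hd ffunE Hin.
Qed.

Lemma leader_decision_consensus (I : Type) (i0 : I) :
  oblivious_consensus e r Phi (leader_decision i0).
Proof.
move=> x phi Hphi; split=> [v w Hv Hw|v Hv].
- have [d Hd ->] := leader_decision_view i0 x Hphi Hv.
  have [d' Hd' ->] := leader_decision_view i0 x Hphi Hw.
  have Hvw : IF_connected (v, view e r phi v) (w, view e r phi w).
    by apply: rt_step; exists phi.
  by move: Hd'; rewrite -(leader_connected Hvw) Hd => -[->].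
- by have [d _ ->] := leader_decision_view i0 x Hphi Hv; exists d.
Qed.

End Sufficiency.

End InformationFlow.

Theorem theorem3 (T : finType) (e : rel T) (t r : nat)
    (Phi : fpattern T -> Prop) (I : Type) :
  simple_graph e -> connected_graph e ->
  (forall phi, Phi phi -> valid_fpattern e t phi) ->
  (exists a b : I, a <> b) ->
  consensus_solvable_oblivious e r Phi I <-> every_component_dominated e r Phi.
Proof.
move=> _ _ _ [ia [ib Hab]]; split.
- by case=> dec Hdec; exact: consensus_dominated Hdec ia ib Hab.
- by move=> Hdom; exists (leader_decision e r Phi ia); exact: leader_decision_consensus.
Qed.
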